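(* Let $G$ be a graph, $k$ an integer, and $v$ a vertex of $G$. Suppose $(C_1,C_2)$ is a partition of $N_G(v)$ with $|C_1|\ge|C_2|$ such that (i) $C_1$ and $C_2$ are cliques in $G$, and (ii) letting $M$ be the set of pairs $\{c_1,c_2\}$ with $c_1\in C_1$, $c_2\in C_2$ and $\{c_1,c_2\}\notin E(G)$, every $c_1\in C_1$ is contained in precisely one element of $M$. Let $G'$ be obtained from $G$ by deleting $v$ and all vertices of $C_2$, and then, for every $\{c_1,c_2\}\in M$ with $c_1\in C_1$, $c_2\in C_2$, adding all edges between $c_1$ and the vertices of $N_G(c_2)$ that remain in $G'$. Then $G$ has a vertex cover of size $k$ if and only if $G'$ has a vertex cover of size $k-|C_2|$.
   Context: All graphs are finite, simple, undirected. $N_G(x)$ is the open neighborhood of $x$ in $G$. A clique is a set of pairwise adjacent vertices. A vertex cover is a set of vertices containing at least one endpoint of every edge; ''has a vertex cover of size $k$'' means has a vertex cover of size at most $k$. *)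

(* A finite simple graph on vertex type T is a symmetric,
   irreflexive boolean relation e : rel T. *)
From mathcomp Require Import all_boot all_order all_algebra.
Set Implicit Arguments. Unset Strict Implicit. Unset Printing Implicit Defensive.

Definition nbhd (T : finType) (e : rel T) (x : T) : {set T} := [set y | e x y].

Definition is_clique (T : finType) (e : rel T) (C : {set T}) : Prop :=
  forall x y, x \in C -> y \in C -> x != y -> e x y.

Definition is_vertex_cover (T : finType) (e : rel T) (S : {set T}) : Prop :=
  forall x y, e x y -> (x \in S) || (y \in S).

(* "has a vertex cover of size k" = of size at most k; k is an integer *)
Definition has_vc (T : finType) (e : rel T) (k : int) : Prop :=
  exists S : {set T}, (#|S|%:Z <= k)%R /\ is_vertex_cover e S.

Definition Vred (T : finType) (v : T) (C2 : {set T}) : pred T :=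
  fun x => x \notin v |: C2.

Definition red_vertex (T : finType) (v : T) (C2 : {set T}) : finType :=
  {x : T | Vred v C2 x}.

(* x = c1 gets joined to y \in N_G(c2), for a non-edge pair {c1,c2} in M *)
Definition new_edge (T : finType) (e : rel T) (C1 C2 : {set T}) (x y : T) : bool :=
  [exists c2 in C2, [&& x \in C1, ~~ e x c2 & e c2 y]].

Definition red_edge (T : finType) (e : rel T) (v : T) (C1 C2 : {set T})
  : rel (red_vertex v C2) :=
  fun x y => e (val x) (val y) ||
    [&& val x != val y &
        new_edge e C1 C2 (val x) (val y) || new_edge e C1 C2 (val y) (val x)].

From mathcomp Require Import all_boot all_order all_algebra.
From mathcomp Require Import zify.
Set Implicit Arguments. Unset Strict Implicit. Unset Printing Implicit Defensive.

(* Let B = {v} ∪ C2, so that V(G') = V(G) \ B.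
   A vertex cover S of G meets B in at least |C2| vertices: it misses at most
   one vertex of the clique C2, and it misses v only if it contains all of
   N(v) ⊇ C2.  So S \ B fits the budget k - |C2|, and it covers G' unless an
   added edge c1 y is left uncovered; but then c1 ∉ S forces v ∈ S and all of
   C2 \ {c2} ⊆ S, and y ∉ S forces c2 ∈ S, so B ⊆ S and there is room to add
   the single vertex of the clique C1 missed by S.
   Conversely, given a cover A of G', some w ∈ B has N(w) ⊆ A ∪ B: take v if
   C1 ⊆ A, and otherwise the unique non-neighbour c2 ∈ C2 of some c1 ∈ C1 \ A,
   since every neighbour of c2 outside B is joined to c1 in G'.  Then
   A ∪ (B \ {w}) covers G and has size at most |A| + |C2|. *)

Lemma cover_clique_card_le1 (T : finType) (e : rel T) (S C : {set T}) :
  is_vertex_cover e S -> is_clique e C -> #|C :\: S| <= 1.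
Proof.
move=> coverS cliqueC; apply/card_le1_eqP => x y.
rewrite !inE => /andP[xS xC] /andP[yS yC]; apply/eqP/negPn/negP => yx.
by move: (coverS y x (cliqueC y x yC xC yx)); rewrite (negbTE xS) (negbTE yS).
Qed.

Lemma has_vc_induced (T : finType) (P : pred T) (sT : subFinType P)
    (r : rel T) (k : int) :
  has_vc (fun x y : sT => r (val x) (val y)) k <->
  exists A : {set T}, (#|A|%:Z <= k)%R /\
    forall x y, P x -> P y -> r x y -> (x \in A) || (y \in A).
Proof.
split=> [[S [leSk coverS]] | [A [leAk coverA]]].
- exists (val @: S); rewrite card_imset; last exact: val_inj.
  split=> // x y Px Py rxy.
  have := coverS (Sub x Px : sT) (Sub y Py : sT); rewrite !SubK => /(_ rxy).
  by case/orP=> /(imset_f val); rewrite !SubK => ->; rewrite ?orbT.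
- exists [set x : sT | val x \in A]; split.
    suff : #|[set x : sT | val x \in A]| <= #|A| by lia.
    rewrite -(card_imset _ val_inj).
    by apply/subset_leq_card/subsetP => _ /imsetP[x + ->]; rewrite inE.
  by move=> x y; rewrite !inE; apply: coverA; apply: valP.
Qed.

Section Reduction.

Variables (T : finType) (e : rel T) (v : T) (C1 C2 : {set T}).
Hypotheses (e_sym : symmetric e) (e_irr : irreflexive e).
Hypotheses (hpart : C1 :|: C2 = nbhd e v) (hdisj : C1 :&: C2 = set0).
Hypotheses (hC1 : is_clique e C1) (hC2 : is_clique e C2).
Hypothesis hM : forall c1, c1 \in C1 -> #|[set c2 in C2 | ~~ e c1 c2]| = 1.

Local Notation B := (v |: C2).

(* [red_edge e v C1 C2] is, by conversion, [red_rel] on the values of its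
   arguments; this is how [has_vc_induced] applies to G'. *)
Definition red_rel : rel T := fun x y =>
  e x y || (x != y) && (new_edge e C1 C2 x y || new_edge e C1 C2 y x).

Definition reduced_cover (A : {set T}) : Prop :=
  forall x y, x \notin B -> y \notin B -> red_rel x y -> (x \in A) || (y \in A).

Lemma edge_vE x : e v x = (x \in C1) || (x \in C2).
Proof. by rewrite -in_setU hpart inE. Qed.

Lemma v_notin_C2 : v \notin C2.
Proof. by apply/negP => vC2; move: (e_irr v); rewrite edge_vE vC2 orbT. Qed.

Lemma C1_notin_B x : x \in C1 -> x \notin B.
Proof.
move=> xC1; rewrite !inE negb_or; apply/andP; split.
  by apply/eqP => xv; move: (e_irr v); rewrite -{2}xv edge_vE xC1.
by apply/negP => xC2; move: (in_set0 x); rewrite -hdisj inE xC1 xC2.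
Qed.

Lemma unique_non_neighbor c1 : c1 \in C1 ->
  exists b, forall c2, (c2 \in C2) && ~~ e c1 c2 = (c2 == b).
Proof.
by move/hM/eqP/cards1P => [b Mb]; exists b => c2; rewrite -in_set1 -Mb inE.
Qed.

Section Reduce.

Variable S : {set T}.
Hypothesis coverS : is_vertex_cover e S.

Lemma card_C2_le_cover_B : #|C2| <= #|S :&: B|.
Proof.
have le1 := cover_clique_card_le1 coverS hC2.
have := cardsID S C2; case: (boolP (v \in S)) => vS.
  have : v |: (C2 :&: S) \subset S :&: B.
    by rewrite subUset sub1set !inE vS eqxx setIC setIS // subsetUr.
  move/subset_leq_card; rewrite cardsU1 inE (negbTE v_notin_C2) /=; lia.
have C2S : C2 \subset S.
  apply/subsetP => c cC2; have := @coverS v c.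
  by rewrite edge_vE cC2 orbT (negbTE vS) => /(_ isT).
have : C2 \subset S :&: B by rewrite subsetI C2S subsetUr.
move/subset_leq_card; lia.
Qed.

Lemma uncovered_new_edge_B_sub x y : new_edge e C1 C2 x y ->
  x \notin S -> y \notin S -> B \subset S.
Proof.
case/existsP=> c2 /and4P[c2C2 xC1 nxc2 c2y] xS yS.
have [b bE] := unique_non_neighbor xC1.
rewrite subUset sub1set; apply/andP; split.
  by have := @coverS v x; rewrite edge_vE xC1 (negbTE xS) orbF => /(_ isT).
apply/subsetP => c cC2; case: (eqVneq c c2) => [-> | cc2].
  by move: (@coverS c2 y c2y); rewrite (negbTE yS) orbF.
have exc : e x c.
  apply/negPn/negP => nxc; move/eqP: cc2; apply.
  move: (bE c) (bE c2); rewrite cC2 c2C2 nxc nxc2.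
  by move=> /esym/eqP -> /esym/eqP ->.
by move: (@coverS x c exc); rewrite (negbTE xS).
Qed.

Lemma reduced_cover_of (A : {set T}) : S :\: B \subset A ->
  (forall x y, new_edge e C1 C2 x y -> x \notin S -> y \notin S ->
     (x \in A) || (y \in A)) ->
  reduced_cover A.
Proof.
move=> SBA newA x y xB yB.
have cov z w : z \notin B -> w \notin B -> (z \in S) || (w \in S) ->
    (z \in A) || (w \in A).
  move=> zB wB /orP[] uS; apply/orP; [left | right]; apply/(subsetP SBA);
    by rewrite inE uS ?zB ?wB.
have covN z w : z \notin B -> w \notin B -> new_edge e C1 C2 z w ->
    (z \in A) || (w \in A).
  move=> zB wB nzw; case: (boolP ((z \in S) || (w \in S))); first exact: cov.
  by rewrite negb_or => /andP[]; apply: newA.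
case/orP => [/coverS | /andP[_ /orP[nxy | nyx]]]; first exact: cov.
  exact: covN.
by rewrite orbC; apply: covN.
Qed.

Lemma reduce_cover :
  exists2 A : {set T}, #|A| + #|C2| <= #|S| & reduced_cover A.
Proof.
have cardB : #|B| = #|C2|.+1 by rewrite cardsU1 v_notin_C2.
have [BS | BnS] := boolP (B \subset S).
- exists ((S :\: B) :|: (C1 :\: S)).
    have := cardsUI (S :\: B) (C1 :\: S).
    have := cover_clique_card_le1 coverS hC1.
    rewrite (cardsDS BS); have := subset_leq_card BS; lia.
  apply: reduced_cover_of; first exact: subsetUl.
  move=> x y /existsP[c2 /and4P[_ xC1 _ _]] xS _.
  by rewrite !inE xC1 xS orbT.
- exists (S :\: B).
    rewrite cardsD; have := card_C2_le_cover_B.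
    have := subset_leq_card (subsetIl S B); lia.
  apply: reduced_cover_of => // x y xy xS yS.
  by case/negP: BnS; apply: uncovered_new_edge_B_sub xy xS yS.
Qed.

End Reduce.

Section Lift.

Variable A : {set T}.
Hypothesis coverA : reduced_cover A.

Lemma lift_cover_at w : w \in B -> nbhd e w \subset A :|: B ->
  is_vertex_cover e (A :|: (B :\ w)).
Proof.
move=> wB Nw.
have nbhdS z : e w z -> z \in A :|: (B :\ w).
  move=> ewz; have := subsetP Nw z; rewrite !inE ewz => /(_ isT).
  by have -> : z != w by apply: contraTneq ewz => ->; rewrite e_irr.
move=> x y.
have [-> ewy | xw] := eqVneq x w; first by rewrite (nbhdS y ewy) orbT.
have [-> exw | yw exy] := eqVneq y w; first by rewrite nbhdS // e_sym.
case: (boolP (x \in B)) => xB; first by rewrite in_setU in_setD1 xw xB orbT.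
case: (boolP (y \in B)) => yB; first by rewrite !in_setU !in_setD1 yw yB !orbT.
have rxy : red_rel x y by rewrite /red_rel exy.
by have /orP[] := coverA xB yB rxy; rewrite !in_setU => ->; rewrite ?orbT.
Qed.

Lemma lift_vertex_exists : exists2 w, w \in B & nbhd e w \subset A :|: B.
Proof.
have [C1A | /subsetPn[a aC1 aA]] := boolP (C1 \subset A).
  exists v; first by rewrite setU11.
  apply/subsetP => x; rewrite inE edge_vE => /orP[/(subsetP C1A) | ] xin;
    by rewrite !inE xin ?orbT.
have [b bE] := unique_non_neighbor aC1.
have /andP[bC2 nab] : (b \in C2) && ~~ e a b by rewrite bE.
exists b; first by rewrite !inE bC2 orbT.
apply/subsetP => y; rewrite inE => eby; rewrite in_setU.
case: (boolP (y \in B)) => yB; rewrite ?orbT // orbF.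
have ay : a != y by apply: contraNneq nab => ->; rewrite e_sym.
have ray : red_rel a y.
  apply/orP; right; rewrite ay /=; apply/orP; left.
  by apply/existsP; exists b; rewrite bC2 aC1 nab eby.
by have := coverA (C1_notin_B aC1) yB ray; rewrite (negbTE aA).
Qed.

Lemma lift_cover :
  exists2 S : {set T}, #|S| <= #|A| + #|C2| & is_vertex_cover e S.
Proof.
have [w wB Nw] := lift_vertex_exists.
exists (A :|: (B :\ w)); last exact: lift_cover_at.
have := cardsUI A (B :\ w); have := cardsD1 w B; rewrite cardsU1 v_notin_C2 wB.
lia.
Qed.

End Lift.

End Reduction.

Theorem proposition5 (T : finType) (e : rel T)
  (e_sym : symmetric e) (e_irr : irreflexive e)
  (k : int) (v : T) (C1 C2 : {set T})
  (hpart : C1 :|: C2 = nbhd e v) (hdisj : C1 :&: C2 = set0)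
  (hcard : #|C2| <= #|C1|)
  (hC1 : is_clique e C1) (hC2 : is_clique e C2)
  (hM : forall c1, c1 \in C1 -> #|[set c2 in C2 | ~~ e c1 c2]| = 1) :
  has_vc e k <-> has_vc (@red_edge T e v C1 C2) (k - #|C2|%:Z)%R.
Proof.
have [vc_red vc_redI] := @has_vc_induced _ _ (red_vertex v C2) (red_rel e C1 C2)
  (k - #|C2|%:Z)%R.
split=> [[S [leSk coverS]] | /vc_red[A [leAk coverA]]].
- have [A leAS coverA] := reduce_cover e_irr hpart hC1 hC2 hM coverS.
  by apply: vc_redI; exists A; split; first lia.
- have [S leSA coverS] := lift_cover e_sym e_irr hpart hdisj hM coverA.
  by exists S; split; first lia.
Qed.
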